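(* ${\bf Forb}(\Gamma_{\leq 1})=\{P_3\}$, where $P_3$ is the path on three vertices.
   Context: For a finite graph $G$ and indeterminates $X_G=\{x_u : u\in V(G)\}$, the generalized Laplacian matrix $L(G,X_G)$ is the $V(G)\times V(G)$ matrix over $\mathbb{Z}[X_G]$ with $(u,u)$-entry $x_u$ and $(u,v)$-entry $-m_{uv}$ for $u\ne v$, $m_{uv}$ being the number of edges between $u$ and $v$. The $i$-th critical ideal $I_i(G,X_G)$ is the ideal of $\mathbb{Z}[X_G]$ generated by all $i\times i$ minors of $L(G,X_G)$ (with $I_i=\langle1\rangle$ for $i<1$, $I_i=\langle 0\rangle$ for $i>|V(G)|$). The algebraic co-rank $\gamma(G)$ is the number of critical ideals of $G$ equal to $\langle 1\rangle$. $\Gamma_{\le k}$ is the set of simple connected graphs $G$ with $\gamma(G)\le k$. A graph $G$ is forbidden for $\Gamma_{\le k}$ if $\gamma(G)\ge k+1$; ${\bf Forb}(\Gamma_{\le k})$ is the set of minimal (with respect to taking induced subgraphs) simple connected forbidden graphs for $\Gamma_{\le k}$; equivalently, the simple connected graphs $G$ with $\gamma(G)=k+1$ such that $\gamma(G\setminus v)<\gamma(G)$ for every vertex $v$ of $G$. *)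

From HB Require Import structures.
From mathcomp Require Import all_boot all_order all_algebra.
From mathcomp Require Import mpoly.
From Stdlib Require Import ClassicalEpsilon.

Set Implicit Arguments.
Unset Strict Implicit.
Unset Printing Implicit Defensive.

Import GRing.Theory.
Local Open Scope ring_scope.

Definition simple_graph (V : finType) (e : rel V) : Prop :=
  ssrbool.symmetric e /\ ssrbool.irreflexive e.

Definition connected_graph (V : finType) (e : rel V) : Prop :=
  forall u w : V, connect e u w.

(* The ring Z[X_G]: variables indexed by the vertices, via enum_rank. *)
Notation polyring V := {mpoly int[#|V|]}.

Definition gen_laplacian (V : finType) (e : rel V) : 'M[polyring V]_#|V| :=
  \matrix_(i, j) (if i == j then 'X_i
                  else - ((e (enum_val i) (enum_val j) : nat)%:R)).

(* strictly increasing index maps = choice of a k-subset of rows/columns *)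
Definition incr_idx (k m : nat) (f : {ffun 'I_k -> 'I_m}) : bool :=
  [forall i : 'I_k, forall j : 'I_k, (i < j)%N ==> (f i < f j)%N].

Definition minor (R : comNzRingType) (m k : nat) (A : 'M[R]_m)
  (f g : {ffun 'I_k -> 'I_m}) : R := \det (mxsub f g A).

(* The ideal generated by all k x k minors of A is the unit ideal <1>:
   1 is a linear combination of these minors with polynomial coefficients. *)
Definition minors_ideal_one (R : comNzRingType) (m k : nat) (A : 'M[R]_m) : Prop :=
  exists c : {ffun 'I_k -> 'I_m} -> {ffun 'I_k -> 'I_m} -> R,
    \sum_(f | incr_idx f) \sum_(g | incr_idx g) c f g * minor A f g = 1.

Definition critical_ideal_trivial (V : finType) (e : rel V) (k : nat) : Prop :=
  minors_ideal_one k (gen_laplacian e).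

Definition pbool (P : Prop) : bool :=
  if excluded_middle_informative P then true else false.

(* algebraic co-rank: number of i in 1..|V| with I_i(G,X_G) = <1>
   (I_i = <1> trivially for i < 1, I_i = <0> for i > |V|). *)
Definition gamma (V : finType) (e : rel V) : nat :=
  (\sum_(1 <= i < #|V|.+1) pbool (critical_ideal_trivial e i))%N.

Definition del_vertex (V : finType) (e : rel V) (v : V) : rel {u : V | u != v} :=
  fun a b => e (val a) (val b).
Arguments del_vertex {V} e v.

Definition forb_gamma_le (k : nat) (V : finType) (e : rel V) : Prop :=
  simple_graph e /\ connected_graph e /\ gamma e = k.+1 /\
  forall v : V, (gamma (del_vertex e v) < gamma e)%N.

Definition P3 : rel 'I_3 := fun i j => (i.+1 == j :> nat) || (j.+1 == i :> nat).

Definition graph_iso (V W : finType) (e : rel V) (d : rel W) : Prop :=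
  exists f : V -> W, bijective f /\ forall u w, e u w = d (f u) (f w).

(** The unit ideal is detected by a unimodular minor, and ruled out by an
    evaluation of the variables that makes all minors of the relevant size
    vanish: at [x = 0] two vertices with the same neighbourhood give equal
    rows, and at [x = -1] the Laplacian of a complete graph has all entries
    [-1].  An induced path [a - b - c] has a [1 x 1] and a [2 x 2] unimodular
    minor, so it forces [gamma >= 2]; complete graphs and graphs on two
    vertices have [gamma <= 1], and [P3] itself has [gamma = 2] because its
    ends are twins.  Hence a connected minimal graph with [gamma = 2] is not
    complete, contains an induced [P3], and has no vertex outside it. *)

From mathcomp Require Import all_boot all_order all_algebra.
From mathcomp Require Import mpoly.
From mathcomp Require Import ring.
From Stdlib Require Import ClassicalEpsilon.

Set Implicit Arguments.
Unset Strict Implicit.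
Unset Printing Implicit Defensive.
Import GRing.Theory.
Local Open Scope ring_scope.

Lemma pboolT (P : Prop) : P -> pbool P = true.
Proof. by rewrite /pbool; case: excluded_middle_informative. Qed.

Lemma pboolF (P : Prop) : ~ P -> pbool P = false.
Proof. by rewrite /pbool; case: excluded_middle_informative. Qed.

Lemma incr_idx_inj (k m : nat) (f : {ffun 'I_k -> 'I_m}) :
  incr_idx f -> injective f.
Proof.
move=> f_incr i j fij.
have lt_f (x y : 'I_k) : (x < y)%N -> (f x < f y)%N.
  by move/forallP: f_incr => /(_ x) /forallP /(_ y) /implyP.
by case: (ltngtP i j) => [/lt_f | /lt_f | /val_inj //]; rewrite fij ltnn.
Qed.

Definition pair_idx (m : nat) (x y : 'I_m) : {ffun 'I_2 -> 'I_m} :=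
  [ffun i : 'I_2 => if (val i == 0%N) == (x < y)%N then x else y].

Lemma pair_idx_incr (m : nat) (x y : 'I_m) : x != y -> incr_idx (pair_idx x y).
Proof.
move=> xy; apply/forallP => -[[|[|//]] i2]; apply/forallP => -[[|[|//]] j2] //=.
rewrite !ffunE /=; case: (ltngtP x y) => //= eq_xy.
by rewrite (val_inj eq_xy) eqxx in xy.
Qed.

Lemma det_mx22 (R : comNzRingType) (A : 'M[R]_2) :
  \det A = A 0 0 * A 1 1 - A 0 1 * A 1 0.
Proof.
rewrite (expand_det_row _ 0) !big_ord_recr big_ord0 /cofactor !det_mx11 !mxE /=.
rewrite [widen_ord _ _](_ : _ = 0); last exact: val_inj.
rewrite [lift _ _](_ : _ = 1); last exact: val_inj.
rewrite [lift _ _](_ : _ = 0); last exact: val_inj.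
rewrite [ord_max](_ : _ = 1); last exact: val_inj.
ring.
Qed.

Section Minors.

Variable R : comNzRingType.

Lemma minors_ideal_one_minor (m k : nat) (A : 'M[R]_m)
    (f0 g0 : {ffun 'I_k -> 'I_m}) (c : R) :
  incr_idx f0 -> incr_idx g0 -> c * minor A f0 g0 = 1 -> minors_ideal_one k A.
Proof.
move=> f0_incr g0_incr c_inv.
exists (fun f g => if (f == f0) && (g == g0) then c else 0).
rewrite (bigD1 f0) //= (bigD1 g0) //= !eqxx c_inv big1 ?addr0.
  by rewrite big1 ?addr0 // => f /andP[_ /negbTE->]; rewrite big1 // => g _; rewrite mul0r.
by move=> g /andP[_ /negbTE->]; rewrite andbF mul0r.
Qed.

Lemma map_minors_ideal_one (S : comNzRingType) (phi : {rmorphism R -> S})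
    (m k : nat) (A : 'M[R]_m) :
  minors_ideal_one k A -> minors_ideal_one k (map_mx phi A).
Proof.
move=> [c sum_c]; exists (fun f g => phi (c f g)).
rewrite -(rmorph1 phi) -sum_c rmorph_sum; apply: eq_bigr => f _.
rewrite rmorph_sum; apply: eq_bigr => g _.
by rewrite rmorphM /minor -det_map_mx map_mxsub.
Qed.

Lemma not_minors_ideal_one_twin_rows (m k : nat) (A : 'M[R]_m) :
  (forall f : {ffun 'I_k -> 'I_m}, incr_idx f ->
     exists i1 i2, i1 != i2 /\ A (f i1) =1 A (f i2)) ->
  ~ minors_ideal_one k A.
Proof.
move=> twins [c sum_c]; have := oner_neq0 R; rewrite -sum_c big1 ?eqxx //.
move=> f /twins [i1 [i2 [i12 eq_rows]]]; rewrite big1 // => g _.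
by rewrite /minor (determinant_alternate i12) ?mulr0 // => j; rewrite !mxE eq_rows.
Qed.

End Minors.

Definition induced_P3 (V : finType) (e : rel V) (a b c : V) : bool :=
  [&& e a b, e b c, ~~ e a c & a != c].

Lemma induced_P3_neq (V : finType) (e : rel V) (a b c : V) :
  irreflexive e -> induced_P3 e a b c -> [&& a != b, b != c & a != c].
Proof.
move=> e_irr /and4P[ab bc _ ->]; rewrite andbT.
by apply/andP; split; [apply: contraTneq ab | apply: contraTneq bc] => ->; rewrite e_irr.
Qed.

Section CriticalIdeals.

Variables (V : finType) (e : rel V).

Lemma gen_laplacianE (u w : V) :
  gen_laplacian e (enum_rank u) (enum_rank w) =
  if u == w then 'X_(enum_rank u) else - (e u w)%:R.
Proof. by rewrite mxE !enum_rankK (inj_eq enum_rank_inj). Qed.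

Definition laplacian_at (t : int) : 'M[int]_#|V| :=
  map_mx (meval (fun=> t)) (gen_laplacian e).

Lemma laplacian_atE (t : int) i j :
  laplacian_at t i j = if i == j then t else - (e (enum_val i) (enum_val j))%:R.
Proof.
rewrite !mxE; case: eqP => _; first by rewrite mevalXU.
by rewrite mevalN; case: (e _ _); rewrite /= ?meval1 ?meval0.
Qed.

Lemma not_critical_ideal_twin_rows (t : int) (k : nat) :
  (forall f : {ffun 'I_k -> 'I_#|V|}, incr_idx f ->
     exists i1 i2, i1 != i2 /\ laplacian_at t (f i1) =1 laplacian_at t (f i2)) ->
  ~ critical_ideal_trivial e k.
Proof.
by move=> twins /(map_minors_ideal_one (meval (fun=> t)));
  apply: not_minors_ideal_one_twin_rows.
Qed.

Lemma not_critical_ideal_complete (k : nat) :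
  (2 <= k)%N -> (forall u w, u != w -> e u w) -> ~ critical_ideal_trivial e k.
Proof.
move=> k_ge2 e_complete; apply: (@not_critical_ideal_twin_rows (-1)) => f _.
have all_m1 i j : laplacian_at (-1) i j = -1.
  rewrite laplacian_atE; case: eqP => // /eqP ij.
  by rewrite e_complete // (inj_eq enum_val_inj).
by exists (Ordinal (ltnW k_ge2)), (Ordinal k_ge2); split=> // j; rewrite !all_m1.
Qed.

Hypothesis e_irr : irreflexive e.

Lemma not_critical_ideal_twins (u w : V) :
  u != w -> e u =1 e w -> ~ critical_ideal_trivial e #|V|.
Proof.
move=> uw twins; apply: (@not_critical_ideal_twin_rows 0) => f /incr_idx_inj f_inj.
have f_onto y : y \in codom f by apply: inj_card_onto; rewrite ?card_ord.
have /codomP [i1 f_i1] := f_onto (enum_rank u).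
have /codomP [i2 f_i2] := f_onto (enum_rank w).
have at0 i j : laplacian_at 0 i j = - (e (enum_val i) (enum_val j))%:R.
  by rewrite laplacian_atE; case: eqP => // ->; rewrite e_irr oppr0.
exists i1, i2; split.
  by apply: contra_neq uw => i12; apply: enum_rank_inj; rewrite f_i1 f_i2 i12.
by move=> j; rewrite !at0 -f_i1 -f_i2 !enum_rankK twins.
Qed.

Lemma critical_ideal1_edge (a b : V) : e a b -> critical_ideal_trivial e 1%N.
Proof.
move=> ab; have a_b : a != b by apply: contraTneq ab => ->; rewrite e_irr.
pose idx (v : V) : {ffun 'I_1 -> 'I_#|V|} := [ffun=> enum_rank v].
have idx_incr v : incr_idx (idx v).
  by apply/forallP => -[[|//] ?]; apply/forallP => -[[|//] ?].
apply: (minors_ideal_one_minor (idx_incr a) (idx_incr b) (c := -1)).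
by rewrite /minor det_mx11 mxE !ffunE gen_laplacianE (negbTE a_b) ab mulrNN mulr1.
Qed.

Lemma critical_ideal2_induced_P3 (a b c : V) :
  induced_P3 e a b c -> critical_ideal_trivial e 2%N.
Proof.
move=> P3abc; have /and3P[a_b b_c a_c] := induced_P3_neq e_irr P3abc.
case/and4P: P3abc => ab bc ac _.
have rank_ab : enum_rank a != enum_rank b by rewrite (inj_eq enum_rank_inj).
have rank_bc : enum_rank b != enum_rank c by rewrite (inj_eq enum_rank_inj).
pose M := minor (gen_laplacian e) (pair_idx (enum_rank a) (enum_rank b))
                                  (pair_idx (enum_rank b) (enum_rank c)).
have M_unit : M * M = 1.
  rewrite /M /minor det_mx22 !mxE !ffunE /=.
  case: (enum_rank a < enum_rank b)%N; case: (enum_rank b < enum_rank c)%N;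
  by rewrite /= ?(inj_eq enum_rank_inj) !enum_rankK eqxx (negbTE a_b) (negbTE b_c)
     (negbTE a_c) ab bc (negbTE ac) /= !oppr0 ?mul0r ?mulr0 ?subr0 ?sub0r ?mulrNN ?mulr1.
exact: (minors_ideal_one_minor (pair_idx_incr rank_ab) (pair_idx_incr rank_bc) M_unit).
Qed.

End CriticalIdeals.

Section Gamma.

Variables (V : finType) (e : rel V).

Lemma gamma_le (n : nat) :
  (forall k, (n < k <= #|V|)%N -> ~ critical_ideal_trivial e k) ->
  (gamma e <= n)%N.
Proof.
move=> high_nontriv; rewrite /gamma.
have sum_le m : (\sum_(1 <= i < m.+1) pbool (critical_ideal_trivial e i) <= m)%N.
  apply: (@leq_trans (\sum_(1 <= i < m.+1) 1)); first by apply: leq_sum => i _; case: pbool.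
  by rewrite sum_nat_const_nat subn1 muln1.
have [V_le_n | n_lt_V] := leqP #|V| n; first exact: leq_trans (sum_le _) V_le_n.
rewrite (big_cat_nat _ (n := n.+1)) //=; last exact: ltnW.
rewrite [X in (_ + X)%N](_ : _ = 0%N) ?addn0 ?sum_le //.
rewrite big_nat_cond big1 // => i /andP[/andP[n_lt_i i_le_V] _].
by rewrite pboolF //; apply: high_nontriv; rewrite n_lt_i -ltnS.
Qed.

Lemma gamma_ge2 :
  (2 <= #|V|)%N -> critical_ideal_trivial e 1%N -> critical_ideal_trivial e 2%N ->
  (2 <= gamma e)%N.
Proof.
move=> V_ge2 I1 I2; rewrite /gamma big_ltn ?ltnS ?(leq_trans _ V_ge2) //.
by rewrite big_ltn ?ltnS // (pboolT I1) (pboolT I2) addnA leq_addr.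
Qed.

End Gamma.

Lemma connect_induced_P3 (V : finType) (e : rel V) (u w : V) :
  connect e u w -> u != w -> ~~ e u w -> exists a b c, induced_P3 e a b c.
Proof.
move/connectP => [p e_p ->] {w}.
elim: p u e_p => [|y p IHp] x /=; first by rewrite eqxx.
move=> /andP[xy e_p] x_last not_x_last.
have [y_last | not_y_last] := boolP (e y (last y p)).
  by exists x, y, (last y p); apply/and4P.
apply: IHp e_p _ not_y_last; apply: contraNneq not_x_last => <-.
by rewrite xy.
Qed.

Section GammaBounds.

Variables (V : finType) (e : rel V).
Hypotheses (e_sym : ssrbool.symmetric e) (e_irr : irreflexive e).

Lemma gamma_ge2_induced_P3 (a b c : V) : induced_P3 e a b c -> (2 <= gamma e)%N.
Proof.
move=> P3abc; have /and4P[ab _ _ a_c] := P3abc.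
apply: gamma_ge2 (critical_ideal1_edge e_irr ab) (critical_ideal2_induced_P3 e_irr P3abc).
by apply: leq_trans (max_card [set a; c]); rewrite cards2 a_c.
Qed.

Lemma gamma_le1_card2 : #|V| = 2%N -> (gamma e <= 1)%N.
Proof.
move=> card2; apply: gamma_le => k /andP[k_gt1 k_le2].
have -> : k = #|V| by apply/eqP; rewrite eqn_leq k_le2 card2.
have /card_gt1P [x [y [_ _ xy]]] : (1 < #|V|)%N by rewrite card2.
have cover z : z \in [:: x; y].
  rewrite !inE; case: eqP => //= /eqP zx; apply/eqP.
  have /card_le1_eqP : (#|predC1 x| <= 1)%N by rewrite cardC1 card2.
  by apply; rewrite !inE // eq_sym.
have [exy | not_exy] := boolP (e x y).
  apply: not_critical_ideal_complete; first by rewrite card2.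
  move=> u w; move: (cover u) (cover w); rewrite !inE => /orP[]/eqP-> /orP[]/eqP->;
  by rewrite ?eqxx // e_sym.
apply: (not_critical_ideal_twins e_irr xy) => z; move: (cover z).
by rewrite !inE => /orP[]/eqP->; rewrite !e_irr ?(e_sym y) (negbTE not_exy).
Qed.

End GammaBounds.

Section ForbiddenP3.

Variables (V : finType) (e : rel V).
Hypotheses (e_sym : ssrbool.symmetric e) (e_irr : irreflexive e).

Lemma forb_gamma_le1_P3 :
  forb_gamma_le 1 e -> exists a b c, induced_P3 e a b c /\ forall v, v \in [:: a; b; c].
Proof.
move=> [_ [e_conn [gamma2 del_lt]]].
have [u [w [uw not_uw]]] : exists u w, u != w /\ ~~ e u w.
  have [complete | ] := boolP [forall u, forall w, (u != w) ==> e u w].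
    suff : (gamma e <= 1)%N by rewrite gamma2.
    apply: gamma_le => k /andP[k_gt1 _]; apply: not_critical_ideal_complete k_gt1 _.
    by move=> u w; apply/implyP; move/forallP/(_ u)/forallP: complete.
  rewrite negb_forall => /existsP[u]; rewrite negb_forall => /existsP[w].
  by rewrite negb_imply => /andP[uw not_uw]; exists u, w.
have [a [b [c P3abc]]] := connect_induced_P3 (e_conn u w) uw not_uw.
exists a, b, c; split => // v; apply/negPn/negP; rewrite !inE !negb_or ![v == _]eq_sym.
case/and3P=> va vb vc; have := del_lt v; rewrite gamma2 ltnNge => /negP; apply.
exact: (@gamma_ge2_induced_P3 _ (del_vertex e v) (fun x => e_irr (val x))
         (exist _ a va) (exist _ b vb) (exist _ c vc)).
Qed.

Lemma P3_forb_gamma_le1 (a b c : V) :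
  induced_P3 e a b c -> (forall v, v \in [:: a; b; c]) -> forb_gamma_le 1 e.
Proof.
move=> P3abc cover; have /and4P[ab bc ac a_c] := P3abc.
have /and3P[a_b b_c _] := induced_P3_neq e_irr P3abc.
have card3 : #|V| = 3%N.
  rewrite -[3%N]/(size [:: a; b; c]) -(card_uniqP _); last first.
    by rewrite /= !inE negb_or a_b a_c b_c.
  by apply: eq_card => v; rewrite cover.
have ends_twins : e a =1 e c.
  move=> z; move: (cover z); rewrite !inE => /or3P[]/eqP->;
  by rewrite ?e_irr ?(e_sym c) ?ab ?(negbTE ac).
have gamma2 : gamma e = 2%N.
  apply/eqP; rewrite eqn_leq (gamma_ge2_induced_P3 e_irr P3abc) andbT.
  apply: gamma_le => k /andP[k_gt2 k_le3].
  have -> : k = #|V| by apply/eqP; rewrite eqn_leq k_le3 card3.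
  exact: (not_critical_ideal_twins e_irr a_c ends_twins).
split; first by split.
split.
  have to_b v : connect e v b.
    move: (cover v); rewrite !inE => /or3P[]/eqP->; rewrite ?connect0 //.
      exact: connect1.
    by rewrite connect1 // e_sym.
  by move=> u w; apply: connect_trans (to_b u) _; rewrite (sym_connect_sym e_sym).
split=> // v; rewrite gamma2 ltnS.
apply: gamma_le1_card2 => [x y | x |]; first exact: e_sym; first exact: e_irr.
by rewrite card_sig cardC1 card3.
Qed.

Lemma graph_iso_P3P :
  graph_iso e P3 <-> exists a b c, induced_P3 e a b c /\ forall v, v \in [:: a; b; c].
Proof.
split.
  move=> [f [[g fK gK] e_f]]; exists (g 0), (g 1), (g 2); split.
    by rewrite /induced_P3 !e_f !gK (can_eq gK).
  by move=> v; rewrite -(fK v) !inE !(can_eq gK); case: (f v) => -[|[|[|]]].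
move=> [a [b [c [P3abc cover]]]]; have /and4P[ab bc ac _] := P3abc.
have /and3P[a_b b_c a_c] := induced_P3_neq e_irr P3abc.
have ba : (b == a) = false by rewrite eq_sym (negbTE a_b).
have cb : (c == b) = false by rewrite eq_sym (negbTE b_c).
have ca : (c == a) = false by rewrite eq_sym (negbTE a_c).
pose f v : 'I_3 := if v == a then 0 else if v == b then 1 else 2.
pose g (i : 'I_3) := if val i == 0%N then a else if val i == 1%N then b else c.
have cases v : [\/ v = a, v = b | v = c].
  by move: (cover v); rewrite !inE => /or3P[]/eqP->; [apply: Or31 | apply: Or32 | apply: Or33].
exists f; split.
  exists g => [v | i]; first by case: (cases v) => ->; rewrite /f /g ?eqxx ?ba ?ca ?cb.
  by case: i => -[|[|[|//]]] i_lt; apply: val_inj; rewrite /f /g /= ?eqxx ?ba ?ca ?cb.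
move=> u w; case: (cases u) => ->; case: (cases w) => ->;
by rewrite /f ?eqxx ?ba ?ca ?cb ?e_irr ?ab ?bc ?(e_sym b a) ?(e_sym c) ?(negbTE ac).
Qed.

End ForbiddenP3.

Theorem corollary3p5 (V : finType) (e : rel V) :
  simple_graph e -> (forb_gamma_le 1 e <-> graph_iso e P3).
Proof.
move=> [e_sym e_irr]; rewrite graph_iso_P3P //; split.
  exact: forb_gamma_le1_P3.
by move=> [a [b [c [P3abc cover]]]]; apply: P3_forb_gamma_le1 P3abc cover.
Qed.
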